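(* Let $\mathscr{M}_n$ be the monoid of multipermutations on $[n]$, let $D$ be a $\mathcal{D}$-class of $\mathscr{M}_n$ containing a prime element, and let $T$ be a generating set of the monoid $\mathscr{M}_n$. Then $D\cap T\neq\emptyset$.
   Context: A multipermutation on $[n]$ is a binary relation on $[n]$ in which every element has at least one successor and at least one predecessor (equivalently an $n\times n$ Boolean matrix with no zero row or column); $\mathscr{M}_n$ is the monoid of these under composition of relations (Boolean matrix multiplication), a submonoid of the monoid $\mathcal{B}_n$ of all binary relations on $[n]$. An element $\alpha\in\mathcal{B}_n$ is prime if it is not a permutation and whenever $\alpha=\beta\gamma$ with $\beta,\gamma\in\mathcal{B}_n$, one of $\beta,\gamma$ is a permutation. $\mathcal{D}$ denotes Green's $\mathcal{D}$-relation of $\mathscr{M}_n$. *)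

From mathcomp Require Import all_boot all_fingroup.
Set Implicit Arguments. Unset Strict Implicit. Unset Printing Implicit Defensive.

(* Binary relations on [n] = {0,...,n-1}, i.e. n x n Boolean matrices,
   represented as sets of pairs.  The monoid B_n. *)
Definition brel (n : nat) := {set 'I_n * 'I_n}.

Definition bmul n (a b : brel n) : brel n :=
  [set ij | [exists k : 'I_n, ((ij.1, k) \in a) && ((k, ij.2) \in b)]].

Definition bid n : brel n := [set ij : 'I_n * 'I_n | ij.1 == ij.2].

Definition is_perm_rel n (a : brel n) : Prop :=
  exists s : {perm 'I_n}, a = [set ij : 'I_n * 'I_n | s ij.1 == ij.2].

Definition multiperm n (a : brel n) : Prop :=
  (forall i : 'I_n, exists j : 'I_n, (i, j) \in a) /\
  (forall j : 'I_n, exists i : 'I_n, (i, j) \in a).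

Definition prime_rel n (a : brel n) : Prop :=
  ~ is_perm_rel a /\
  forall b c : brel n, a = bmul b c -> is_perm_rel b \/ is_perm_rel c.

Definition R_rel n (a b : brel n) : Prop :=
  (exists x, multiperm x /\ a = bmul b x) /\ (exists y, multiperm y /\ b = bmul a y).
Definition L_rel n (a b : brel n) : Prop :=
  (exists x, multiperm x /\ a = bmul x b) /\ (exists y, multiperm y /\ b = bmul y a).
Definition D_rel n (a b : brel n) : Prop :=
  exists c, multiperm c /\ L_rel a c /\ R_rel c b.

Definition bprod n (s : seq (brel n)) : brel n := foldr (@bmul n) (bid n) s.

Definition generates_Mn n (T : {set brel n}) : Prop :=
  (forall t, t \in T -> multiperm t) /\
  (forall a, multiperm a ->
     exists s : seq (brel n), (forall t, t \in s -> t \in T) /\ a = bprod s).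

From mathcomp Require Import all_boot all_fingroup.
Set Implicit Arguments. Unset Strict Implicit. Unset Printing Implicit Defensive.

(* Write p = t_1 ... t_k with the t_i in T.  Scanning from the left, primality
   of p = (sigma t_i) (t_(i+1) ... t_k), with sigma a permutation, forces either
   sigma t_i to be a permutation (absorb t_i and go on) or t_(i+1) ... t_k to
   be a permutation pi.  The scan cannot absorb every factor since p is not a
   permutation, so some p = sigma t_i pi, and multiplying by units on either
   side preserves the D-class. *)

Section Relations.
Local Open Scope group_scope.
Variable n : nat.
Implicit Types (a b c p : brel n) (r s : {perm 'I_n}).

Definition perm_rel s : brel n := [set ij : 'I_n * 'I_n | s ij.1 == ij.2].

Lemma bmulA a b c : bmul a (bmul b c) = bmul (bmul a b) c.
Proof.
apply/setP => -[i j]; rewrite !inE /=.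
apply/existsP/existsP => [[k /andP[aik]]|[k /andP[]]].
  rewrite inE => /existsP[l /andP[bkl clj]].
  by exists l; rewrite clj andbT inE; apply/existsP; exists k; rewrite aik.
rewrite inE => /existsP[l /andP[ail blk]] ckj.
by exists l; rewrite ail inE; apply/existsP; exists k; rewrite blk.
Qed.

Lemma bmul1l a : bmul (bid n) a = a.
Proof.
apply/setP => -[i j]; rewrite !inE /=.
apply/existsP/idP => [[k /andP[]]|aij]; last by exists i; rewrite aij inE /= eqxx.
by rewrite inE /= => /eqP ->.
Qed.

Lemma bmul1r a : bmul a (bid n) = a.
Proof.
apply/setP => -[i j]; rewrite !inE /=.
apply/existsP/idP => [[k /andP[aik]]|aij]; last by exists j; rewrite aij inE /= eqxx.
by rewrite inE /= => /eqP <-.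
Qed.

Lemma perm_rel1 : perm_rel 1 = bid n.
Proof. by apply/setP => -[i j]; rewrite !inE perm1. Qed.

Lemma perm_relM s r : bmul (perm_rel s) (perm_rel r) = perm_rel (s * r).
Proof.
apply/setP => -[i j]; rewrite !inE /= permM.
apply/existsP/idP => [[k /andP[]]|stij]; last by exists (s i); rewrite !inE /= eqxx.
by rewrite !inE /= => /eqP -> /eqP ->.
Qed.

Lemma perm_relMV s a : bmul (perm_rel s^-1) (bmul (perm_rel s) a) = a.
Proof. by rewrite bmulA perm_relM mulVg perm_rel1 bmul1l. Qed.

Lemma perm_relMVr s a : bmul (bmul a (perm_rel s)) (perm_rel s^-1) = a.
Proof. by rewrite -bmulA perm_relM mulgV perm_rel1 bmul1r. Qed.

Lemma multiperm_perm_rel s : multiperm (perm_rel s).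
Proof.
split=> [i|j]; first by exists (s i); rewrite inE /= eqxx.
by exists (s^-1 j); rewrite inE /= permKV.
Qed.

Lemma multiperm_bmul a b : multiperm a -> multiperm b -> multiperm (bmul a b).
Proof.
move=> [rowa cola] [rowb colb]; split=> [i|j].
  have [k aik] := rowa i; have [j bkj] := rowb k.
  by exists j; rewrite inE; apply/existsP; exists k; rewrite aik bkj.
have [k bkj] := colb j; have [i aik] := cola k.
by exists i; rewrite inE; apply/existsP; exists k; rewrite aik bkj.
Qed.

Lemma L_rel_perm_relMl s a : L_rel a (bmul (perm_rel s) a).
Proof.
split; last by exists (perm_rel s); split; first exact: multiperm_perm_rel.
by exists (perm_rel s^-1); rewrite perm_relMV; split; first exact: multiperm_perm_rel.
Qed.

Lemma R_rel_perm_relMr s a : R_rel a (bmul a (perm_rel s)).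
Proof.
split; last by exists (perm_rel s); split; first exact: multiperm_perm_rel.
by exists (perm_rel s^-1); rewrite perm_relMVr; split; first exact: multiperm_perm_rel.
Qed.

Lemma D_rel_perm_relM s r a :
  multiperm a -> D_rel a (bmul (perm_rel s) (bmul a (perm_rel r))).
Proof.
move=> ma; exists (bmul (perm_rel s) a); split.
  exact: multiperm_bmul (multiperm_perm_rel s) ma.
by split; [exact: L_rel_perm_relMl | rewrite bmulA; exact: R_rel_perm_relMr].
Qed.

Lemma prime_bprod_factor p (ts : seq (brel n)) s :
  prime_rel p -> p = bmul (perm_rel s) (bprod ts) ->
  exists t s' r, t \in ts /\ p = bmul (perm_rel s') (bmul t (perm_rel r)).
Proof.
move=> [notperm_p prime_p]; elim: ts s => [|t ts IH] s /= def_p.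
  by case: notperm_p; exists s; rewrite def_p bmul1r.
rewrite bmulA in def_p.
have [[s' def_st]|[r def_ts]] := prime_p _ _ def_p.
  have /IH[u [s'' [r [u_ts def_p']]]] : p = bmul (perm_rel s') (bprod ts).
    by rewrite def_p def_st.
  by exists u, s'', r; rewrite inE u_ts orbT.
by exists t, s, r; rewrite inE eqxx def_p def_ts bmulA.
Qed.

End Relations.

Theorem lemma4p7 (n : nat) (p : brel n) (T : {set brel n}) :
  multiperm p -> prime_rel p -> generates_Mn T ->
  exists t, t \in T /\ multiperm t /\ D_rel t p.
Proof.
move=> mp prime_p [multiperm_T generates_T].
have [ts [ts_T def_p]] := generates_T p mp.
have [t [s [s' [t_ts ->]]]] :
    exists t s s', t \in ts /\ p = bmul (perm_rel s) (bmul t (perm_rel s')).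
  by apply: (prime_bprod_factor (s := 1) prime_p); rewrite perm_rel1 bmul1l.
have mt := multiperm_T t (ts_T t t_ts).
by exists t; split; [exact: ts_T | split; [exact: mt | exact: D_rel_perm_relM]].
Qed.
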